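(* Let $G$ be a graph and let $c_1,\ldots,c_m$ be $m$ proper colorings of $G$. Then there is a vertex of $G$ that, for each $i\in[m]$, is adjacent to vertices of at least $\left\lfloor\frac{1}{2m}\operatorname{ind}(\operatorname{Hom}(K_2,G))\right\rfloor+1$ distinct colors in the coloring $c_i$.
   Context: For a graph $G=(V,E)$, $\operatorname{Hom}(K_2,G)$ is the poset whose elements are the pairs $(A,B)$ of non-empty disjoint subsets of $V$ such that every vertex of $A$ is adjacent to every vertex of $B$, ordered by $(A,B)\preceq(A',B')$ iff $A\subseteq A'$ and $B\subseteq B'$; it is identified with its order complex (vertices are the poset elements, simplices are the chains), which carries the free $\mathbb{Z}_2$-action $(A,B)\mapsto(B,A)$. For a free simplicial $\mathbb{Z}_2$-complex $\mathsf{K}$, its $\mathbb{Z}_2$-index $\operatorname{ind}(\mathsf{K})$ is the minimal $d$ such that there is a continuous map from (the geometric realization of) $\mathsf{K}$ to the sphere $\mathcal{S}^d$ commuting with the $\mathbb{Z}_2$-actions (the action on $\mathcal{S}^d$ being the antipodal map). *)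

From HB Require Import structures.
From mathcomp Require Import all_boot all_order all_algebra.
From mathcomp Require Import boolp classical_sets reals topology normedtype function_spaces.
Set Implicit Arguments. Unset Strict Implicit. Unset Printing Implicit Defensive.
Import Order.TTheory GRing.Theory Num.Theory.
Import numFieldNormedType.Exports.
Local Open Scope ring_scope.
Local Open Scope classical_set_scope.

Definition simple_graph (T : finType) (e : rel T) :=
  symmetric e /\ irreflexive e.

Definition proper_coloring (T : finType) (e : rel T) (c : T -> nat) :=
  forall u v, e u v -> c u != c v.

Definition nb_neighbor_colors (T : finType) (e : rel T) (c : T -> nat) (v : T) : nat :=
  size (undup [seq c u | u <- enum [pred u | e v u]]).

(** Candidate vertices of Hom(K_2,G): pairs (A,B) of subsets of V. *)
Notation HomK2_cand T := ({set T} * {set T})%type.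

Definition is_HomK2 (T : finType) (e : rel T) (p : HomK2_cand T) : bool :=
  [&& p.1 != finset.set0, p.2 != finset.set0, [disjoint p.1 & p.2]
    & [forall a in p.1, forall b in p.2, e a b]].

Definition HomK2_le (T : finType) (p q : HomK2_cand T) : bool :=
  (p.1 \subset q.1) && (p.2 \subset q.2).

Definition HomK2_swap (T : finType) (p : HomK2_cand T) : HomK2_cand T :=
  (p.2, p.1).

(** Geometric realization of the order complex of Hom(K_2,G), embedded in
    R^(HomK2_cand T) with the product (= Euclidean) topology: points are convex combinations (barycentric coordinates)
    of poset elements whose support is a chain. *)
Notation RHomK2 R T := {ptws HomK2_cand T -> R}.

Definition HomK2_realization (R : realType) (T : finType) (e : rel T)
  : set (RHomK2 R T) :=
  [set x | (forall p, 0 <= x p)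
         /\ (\sum_(p : HomK2_cand T) x p = 1)
         /\ (forall p, x p != 0 -> is_HomK2 e p)
         /\ (forall p q, x p != 0 -> x q != 0 -> HomK2_le p q || HomK2_le q p)].

Definition HomK2_act (R : realType) (T : finType) (x : RHomK2 R T)
  : RHomK2 R T := fun p => x (HomK2_swap p).

Definition unit_sphere (R : realType) (n : nat) : set 'rV[R]_n :=
  [set y | \sum_(i < n) (y ord0 i) ^+ 2 = 1].

Definition HomK2_Z2map_to (R : realType) (T : finType) (e : rel T) (n : nat) :=
  exists f : RHomK2 R T -> 'rV[R]_n,
    {within @HomK2_realization R T e, continuous f}
    /\ (forall x, @HomK2_realization R T e x -> @unit_sphere R n (f x))
    /\ (forall x, @HomK2_realization R T e x -> f (HomK2_act x) = - f x).

(** Z_2-index of Hom(K_2,G): the minimal d such that there is a Z_2-map to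
    S^d; we quantify over n = d+1 (with S^(-1) = the empty sphere of R^0, so
    the empty complex has index -1). Default value 0 in the (impossible)
    case where no such map exists. *)
Definition Z2index_HomK2 (R : realType) (T : finType) (e : rel T) : int :=
  match pselect (exists n, @HomK2_Z2map_to R T e n) with
  | left ex => (ex_minn (P := fun n => `[< @HomK2_Z2map_to R T e n >])
                  (let: ex_intro n h := ex in ex_intro _ n (asboolT h)))%:Z - 1
  | right _ => 0
  end.

From HB Require Import structures.
From mathcomp Require Import all_boot all_order all_algebra.
From mathcomp Require Import boolp classical_sets reals topology normedtype function_spaces.
From mathcomp Require Import realfun zify.
Import Order.TTheory GRing.Theory Num.Theory.
Import numFieldNormedType.Exports.
Set Implicit Arguments. Unset Strict Implicit. Unset Printing Implicit Defensive.

(* Suppose every vertex sees at most d colours in one of the colourings c_i.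
   For a vertex set A put w_i(A) = min(#c_i(A), d+1), w(A) = sum_i w_i(A), and
   label A by the tuple recording, for each i with #c_i(A) <= d, the c_i-colour
   class of A.  For (A,B) in Hom(K_2,G) every vertex of B sees all of A, so some
   w_i(A) <= d and likewise for B: the level w(A) + w(B) - 2m lies in [0, 2md).
   Along a chain the level is monotone, and where it is constant both labels are
   constant; the labels of A and B differ since the colourings are proper.
   Sending (A,B) to +-e_level, the sign comparing the two labels, and extending
   linearly gives an odd map into R^(2md).  It does not vanish on the
   realization: the support of a point is a chain, so all its elements of the
   same level contribute with the same sign.  Normalizing gives a Z_2-map to
   S^(2md-1), hence ind < 2md, contradicting d = floor(ind / 2m). *)

Lemma leq_sum_eq (I : finType) (E1 E2 : I -> nat) :
  (forall i, E1 i <= E2 i) -> \sum_i E1 i = \sum_i E2 i -> forall i, E1 i = E2 i.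
Proof.
move=> le12 /eqP; rewrite (leqif_sum (fun i _ => leqif_eq (le12 i))).
by move=> /forall_inP eq12 i; apply/eqP/eq12.
Qed.

Section NumberOfColors.
Variables (T : finType) (X : eqType) (f : T -> X).

Definition ncolors (P : {pred T}) : nat := size (undup [seq f u | u <- enum P]).

Lemma ncolors_sub (P Q : {pred T}) : {subset P <= Q} -> ncolors P <= ncolors Q.
Proof.
move=> PQ; apply: uniq_leq_size (undup_uniq _) _ => x.
by rewrite !mem_undup => /mapP [u]; rewrite mem_enum => /PQ Qu ->; rewrite map_f ?mem_enum.
Qed.

Lemma ncolors_gt0 (A : {set T}) : A != finset.set0 -> 0 < ncolors A.
Proof.
case/set0Pn => a Aa; rewrite /ncolors -has_predT; apply/hasP; exists (f a) => //.
by rewrite mem_undup map_f ?mem_enum.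
Qed.

Definition color_class (A : {set T}) : {set T} :=
  [set v | f v \in [seq f a | a <- enum A]].

Lemma color_class_eq (A B : {set T}) :
  A \subset B -> ncolors A = ncolors B -> color_class A = color_class B.
Proof.
move=> /fintype.subsetP AB eqAB; apply/setP => v; rewrite !inE.
have sub : {subset undup [seq f a | a <- enum A] <= undup [seq f b | b <- enum B]}.
  move=> x; rewrite !mem_undup => /mapP [a]; rewrite mem_enum => /AB Ba ->.
  by rewrite map_f ?mem_enum.
have [_ /(_ (f v))] := uniq_min_size (undup_uniq _) sub (eq_leq (esym eqAB)).
by rewrite !mem_undup.
Qed.

End NumberOfColors.

Lemma nb_neighbor_colorsE (T : finType) (e : rel T) (c : T -> nat) v :
  nb_neighbor_colors e c v = ncolors c [pred u | e v u].
Proof. by []. Qed.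

Lemma is_HomK2_inv (T : finType) (e : rel T) (p : HomK2_cand T) : is_HomK2 e p ->
  [/\ p.1 != finset.set0, p.2 != finset.set0 & forall a b, a \in p.1 -> b \in p.2 -> e a b].
Proof.
case/and4P => p1 p2 _ /forall_inP edges; split=> // a b /edges /forall_inP; exact.
Qed.

Lemma HomK2_swapK (T : finType) : involutive (@HomK2_swap T).
Proof. by case. Qed.

Lemma is_HomK2_swap (T : finType) (e : rel T) (p : HomK2_cand T) :
  symmetric e -> is_HomK2 e (HomK2_swap p) = is_HomK2 e p.
Proof.
move=> e_sym; rewrite /is_HomK2 /= disjoint_sym andbCA; congr [&& _, _, _ & _].
apply/forall_inP/forall_inP => edges x xA; apply/forall_inP => y yB;
  by rewrite e_sym; move/forall_inP: (edges y yB); apply.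
Qed.

Local Open Scope ring_scope.

Section Normalize.
Context {R : realType} {n : nat}.

Definition sqnorm (y : 'rV[R]_n) : R := \sum_j y ord0 j ^+ 2.

Lemma sqnorm_gt0 (y : 'rV[R]_n) : y != 0 -> 0 < sqnorm y.
Proof.
move=> y_neq0; rewrite lt0r sumr_ge0 ?andbT => [|j _]; last exact: sqr_ge0.
apply: contra y_neq0 => /eqP /psumr_eq0P y0; apply/eqP/rowP => j; rewrite mxE.
by apply/eqP; rewrite -sqrf_eq0 y0 // => k _; apply: sqr_ge0.
Qed.

Lemma sqnormZ a (y : 'rV[R]_n) : sqnorm (a *: y) = a ^+ 2 * sqnorm y.
Proof. by rewrite mulr_sumr; apply: eq_bigr => j _; rewrite mxE exprMn. Qed.

Lemma sqnorm_continuous : continuous sqnorm.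
Proof.
apply: continuous_big => [|j _]; first exact: add_continuous.
move=> y.
exact: continuous_comp (@coord_continuous R 1 n ord0 j y) (@exprn_continuous R 2 _).
Qed.

Definition normalize (y : 'rV[R]_n) : 'rV[R]_n := (Num.sqrt (sqnorm y))^-1 *: y.

Lemma normalizeN (y : 'rV[R]_n) : normalize (- y) = - normalize y.
Proof. by rewrite /normalize -scaleN1r sqnormZ sqrrN expr1n mul1r scaleN1r scalerN. Qed.

Lemma normalize_unit_sphere (y : 'rV[R]_n) : y != 0 -> unit_sphere (normalize y).
Proof.
move=> /sqnorm_gt0 y_gt0; rewrite /unit_sphere /= -/(sqnorm _) sqnormZ exprVn.
by rewrite sqr_sqrtr ?ltW // mulVf ?gt_eqF.
Qed.

Lemma normalize_continuous (y : 'rV[R]_n) : y != 0 -> {for y, continuous normalize}.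
Proof.
move=> /sqnorm_gt0 y_gt0; apply: continuousZ; last exact: cvg_id.
apply: continuousV; first by rewrite gt_eqF ?sqrtr_gt0.
exact: continuous_comp (@sqnorm_continuous y) (@sqrt_continuous R _).
Qed.

End Normalize.

Lemma HomK2_Z2map_of_odd (R : realType) (T : finType) (e : rel T) n
    (g : RHomK2 R T -> 'rV[R]_n) :
  continuous g -> (forall x, HomK2_realization e x -> g x != 0) ->
  (forall x, HomK2_realization e x -> g (HomK2_act x) = - g x) ->
  HomK2_Z2map_to R e n.
Proof.
move=> g_cont g_neq0 g_odd; exists (normalize \o g); split; [|split] => [|x ex|x ex] /=.
- apply: continuous_in_subspaceT => x; rewrite inE => ex.
  exact: continuous_comp (@g_cont x) (normalize_continuous (g_neq0 x ex)).
- exact: normalize_unit_sphere (g_neq0 x ex).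
- by rewrite g_odd // normalizeN.
Qed.

Definition cmp_sign (R : nzRingType) (a b : nat) : R := (a < b)%N%:R - (b < a)%N%:R.

Lemma cmp_signC (R : nzRingType) a b : cmp_sign R b a = - cmp_sign R a b.
Proof. by rewrite /cmp_sign opprB. Qed.

Lemma cmp_sign_neq0 (R : nzRingType) a b : a != b -> cmp_sign R a b != 0.
Proof.
by rewrite /cmp_sign; case: ltngtP; rewrite ?subr0 ?sub0r ?oppr_eq0 ?oner_eq0.
Qed.

Section LevelMap.
Variables (R : realType) (T : finType) (e : rel T) (n : nat).
Variables (level : HomK2_cand T -> nat) (sign : HomK2_cand T -> R).
Hypothesis level_swap : forall p, level (HomK2_swap p) = level p.
Hypothesis sign_swap : forall p, sign (HomK2_swap p) = - sign p.
Hypothesis sign_neq0 : forall p, is_HomK2 e p -> sign p != 0.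
Hypothesis level_lt : forall p, is_HomK2 e p -> (level p < n)%N.
Hypothesis sign_chain : forall p q, is_HomK2 e p -> HomK2_le p q ->
  level p = level q -> sign p = sign q.

Definition level_vec p : 'rV[R]_n := \row_j (sign p * (level p == j)%:R).

Definition level_map (x : RHomK2 R T) : 'rV[R]_n := \sum_p x p *: level_vec p.

Lemma level_map_continuous : continuous level_map.
Proof.
apply: continuous_big => [|p _]; first exact: add_continuous.
by move=> x; apply: continuousZr_tmp; apply: proj_continuous.
Qed.

Lemma level_map_act x : level_map (HomK2_act x) = - level_map x.
Proof.
rewrite /level_map (reindex_inj (inv_inj (@HomK2_swapK T))) -sumrN.
apply: eq_bigr => p _; rewrite /HomK2_act HomK2_swapK -scalerN; congr (_ *: _).
by apply/rowP => j; rewrite !mxE level_swap sign_swap mulNr.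
Qed.

Lemma level_map_neq0 x : HomK2_realization e x -> level_map x != 0.
Proof.
case=> x_ge0 [x_sum1 [x_hom x_chain]].
have [|p0 /andP [_ x_p0]] := @psumr_neq0P _ _ xpredT x (fun p _ => x_ge0 p).
  by rewrite x_sum1; apply/eqP/oner_neq0.
have p0_hom := x_hom p0 (lt0r_neq0 x_p0).
pose j := Ordinal (level_lt p0_hom).
have entry : level_map x ord0 j = sign p0 * \sum_p x p * (level p == level p0)%:R.
  rewrite summxE mulr_sumr; apply: eq_bigr => p _; rewrite !mxE /=.
  have [-> | x_p] := eqVneq (x p) 0; first by rewrite !mul0r mulr0.
  have [eq_level | _] := eqVneq (level p) (level p0); last by rewrite !mulr0.
  suff -> : sign p = sign p0 by rewrite mulrCA.
  have [le | le] := orP (x_chain p p0 x_p (lt0r_neq0 x_p0)).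
  - exact: sign_chain (x_hom p x_p) le eq_level.
  - exact/esym/(sign_chain p0_hom le)/esym.
apply: contraTneq isT => /rowP /(_ j); rewrite entry mxE => /eqP.
rewrite mulf_eq0 (negbTE (sign_neq0 p0_hom)) /= (bigD1 p0) //= eqxx mulr1 gt_eqF //.
by rewrite ltr_wpDr // sumr_ge0 // => p _; rewrite mulr_ge0 ?ler0n.
Qed.

Lemma HomK2_Z2map_of_level : HomK2_Z2map_to R e n.
Proof.
exact: HomK2_Z2map_of_odd level_map_continuous level_map_neq0 (fun x _ => level_map_act x).
Qed.

End LevelMap.

Section FewNeighborColors.
Local Open Scope nat_scope.
Variables (T : finType) (e : rel T) (m : nat) (c : 'I_m -> T -> nat) (d : nat).
Hypothesis e_sym : symmetric e.
Hypothesis c_proper : forall i, proper_coloring e (c i).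
Hypothesis few_colors : forall v, exists i, nb_neighbor_colors e (c i) v <= d.

Definition capped_ncolors i (A : {set T}) : nat := minn (ncolors (c i) A) d.+1.

Definition color_label (A : {set T}) : {ffun 'I_m -> option {set T}} :=
  [ffun i => if ncolors (c i) A <= d then Some (color_class (c i) A) else None].

Definition color_weight (A : {set T}) : nat := \sum_(i < m) capped_ncolors i A.

Definition color_level (p : HomK2_cand T) : nat :=
  color_weight p.1 + color_weight p.2 - 2 * m.

Lemma HomK2_few_colors (p : HomK2_cand T) : is_HomK2 e p ->
  exists i, ncolors (c i) p.1 <= d.
Proof.
case/is_HomK2_inv => _ /set0Pn [b p2b] edges; have [i] := few_colors b.
rewrite nb_neighbor_colorsE => few; exists i; apply: leq_trans few.
by apply: ncolors_sub => a p1a; rewrite inE e_sym edges.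
Qed.

Lemma color_weight_ge (A : {set T}) : A != finset.set0 -> m <= color_weight A.
Proof.
move=> /ncolors_gt0 A_gt0; rewrite -[X in X <= _]card_ord -sum1_card.
by apply: leq_sum => i _; rewrite leq_min A_gt0.
Qed.

Lemma color_weight_lt (A : {set T}) i0 : ncolors (c i0) A <= d ->
  color_weight A < m * d.+1.
Proof.
move=> few; have -> : m * d.+1 = \sum_(i < m) d.+1 by rewrite sum_nat_const card_ord.
rewrite /color_weight (bigD1 i0) //= [ltnRHS](bigD1 i0) //= -addSn leq_add //.
  by rewrite ltnS geq_min few.
by apply: leq_sum => i _; rewrite geq_minr.
Qed.

Lemma color_level_lt (p : HomK2_cand T) : is_HomK2 e p -> color_level p < 2 * m * d.
Proof.
move=> Hp; have [i1 few1] := HomK2_few_colors Hp.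
have [|i2 few2] := HomK2_few_colors (p := HomK2_swap p); first by rewrite is_HomK2_swap.
have [p1 _ _] := is_HomK2_inv Hp.
have := color_weight_lt few1; have /= := color_weight_lt few2.
have := color_weight_ge p1; rewrite /color_level; nia.
Qed.

Lemma capped_ncolors_mono i (A B : {set T}) :
  A \subset B -> capped_ncolors i A <= capped_ncolors i B.
Proof.
move=> /fintype.subsetP AB; have := ncolors_sub (c i) AB; rewrite /capped_ncolors; lia.
Qed.

Lemma color_weight_mono (A B : {set T}) : A \subset B -> color_weight A <= color_weight B.
Proof. by move=> AB; apply: leq_sum => i _; apply: capped_ncolors_mono. Qed.

Lemma color_label_capped_eq i (A B : {set T}) : A \subset B ->
  capped_ncolors i A = capped_ncolors i B -> color_label A i = color_label B i.
Proof.
move=> AB; have := ncolors_sub (c i) (fintype.subsetP AB).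
rewrite /capped_ncolors !ffunE; case: ifP => fewA; case: ifP => fewB // le eq_capped.
- by rewrite (color_class_eq AB) //; lia.
- lia.
- lia.
Qed.

Lemma color_label_weight_eq (A B : {set T}) : A \subset B ->
  color_weight A = color_weight B -> color_label A = color_label B.
Proof.
move=> AB eq_weight; apply/ffunP => i; apply: color_label_capped_eq => //.
by apply: leq_sum_eq eq_weight i => j; apply: capped_ncolors_mono.
Qed.

Lemma color_label_chain (p q : HomK2_cand T) :
  is_HomK2 e p -> HomK2_le p q -> color_level p = color_level q ->
  color_label p.1 = color_label q.1 /\ color_label p.2 = color_label q.2.
Proof.
move=> Hp /andP [pq1 pq2]; have [p1 p2 _] := is_HomK2_inv Hp.
have := color_weight_mono pq1; have := color_weight_mono pq2.
have := color_weight_ge p1; have := color_weight_ge p2.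
by rewrite /color_level => *; split; apply: color_label_weight_eq => //; lia.
Qed.

Lemma color_label_neq (p : HomK2_cand T) :
  is_HomK2 e p -> color_label p.1 != color_label p.2.
Proof.
move=> Hp; have [i few] := HomK2_few_colors Hp.
have [/set0Pn [a p1a] _ edges] := is_HomK2_inv Hp.
apply/eqP => /ffunP /(_ i); rewrite !ffunE few; case: ifP => // _ [] /setP /(_ a).
rewrite !inE map_f ?mem_enum // => /esym /mapP [b]; rewrite mem_enum => p2b.
by apply/eqP; apply: c_proper; apply: edges.
Qed.

Definition color_sign (R : nzRingType) (p : HomK2_cand T) : R :=
  cmp_sign R (enum_rank (color_label p.1)) (enum_rank (color_label p.2)).

Lemma HomK2_Z2map_of_few_colors (R : realType) : HomK2_Z2map_to R e (2 * m * d).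
Proof.
apply: (@HomK2_Z2map_of_level R T e _ color_level (color_sign R))
  => [p|p|p Hp|p Hp|p q Hp pq].
- by rewrite /color_level addnC.
- exact: cmp_signC.
- apply: cmp_sign_neq0; apply: contra (color_label_neq Hp) => /eqP eq_rank.
  by apply/eqP/enum_rank_inj/val_inj.
- exact: color_level_lt.
- by case/(color_label_chain Hp pq) => eq1 eq2; rewrite /color_sign eq1 eq2.
Qed.

End FewNeighborColors.

Lemma Z2index_HomK2_lt (R : realType) (T : finType) (e : rel T) n :
  HomK2_Z2map_to R e n -> Z2index_HomK2 R e < n%:Z.
Proof.
move=> map_n; rewrite /Z2index_HomK2; case: pselect => [ex|]; last by case; exists n.
case: ex_minnP => k _ /(_ n (asboolT map_n)) k_le_n.
by rewrite ltrBlDr; lia.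
Qed.

Theorem corollary1p2 (R : realType) (T : finType) (e : rel T) (m : nat)
    (c : 'I_m -> T -> nat) :
  simple_graph e -> (0 < #|T|)%N -> (0 < m)%N ->
  (forall i, proper_coloring e (c i)) ->
  exists v : T, forall i : 'I_m,
    (@Z2index_HomK2 R T e %/ (2 * m)%:Z)%Z + 1 <= (nb_neighbor_colors e (c i) v)%:Z.
Proof.
move=> [e_sym _] /card_gt0P [v0 _] m_gt0 c_proper.
set q := (Z2index_HomK2 R e %/ (2 * m)%:Z)%Z.
have [q_lt0 | q_ge0] := ltP q 0; first by exists v0 => i; lia.
have [d def_q] : exists d : nat, q = d%:Z by exists `|q|%N; rewrite gez0_abs.
apply/not_existsP => no_vertex.
have few_colors v : exists i, (nb_neighbor_colors e (c i) v <= d)%N.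
  by have /existsNP [i] := no_vertex v; exists i; lia.
have := Z2index_HomK2_lt (HomK2_Z2map_of_few_colors e_sym c_proper few_colors R).
have : q * (2 * m)%:Z <= Z2index_HomK2 R e by apply: lez_floor; lia.
by rewrite def_q; lia.
Qed.
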